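(* Let $d=\infty$, $C>0$ and ${\boldsymbol\gamma}\in\mathcal M_d$. Then $T^\downarrow_{d,C}{\boldsymbol\gamma}\in\mathcal S_{d,C}$, and for every $u\in\mathcal U_d$ the iterated limit $\lim_{r\to\infty}\lim_{s\to\infty}(\Delta_{[s]\setminus[r]}{\boldsymbol\gamma})_u$ exists and $$\big((T^\uparrow_{d,C}\circ T^\downarrow_{d,C}){\boldsymbol\gamma}\big)_u=\lim_{r\to\infty}\lim_{s\to\infty}(\Delta_{[s]\setminus[r]}{\boldsymbol\gamma})_u\le\gamma_u.$$
   Context: Let $d\in\mathbb N\cup\{\infty\}$. Write $[d]=\{1,\dots,d\}$ if $d\in\mathbb N$ and $[d]=\mathbb N$ if $d=\infty$; for $s\in\mathbb N$, $[s]=\{1,\dots,s\}$. Let $\mathcal U_d$ be the set of all finite subsets of $[d]$. The set of weights is $\mathcal W_d=\{{\boldsymbol\gamma}\in\mathbb R^{\mathcal U_d}:{\boldsymbol\gamma}\ge\mathbf 0\}$ (inequalities componentwise). For $v\in\mathcal U_d$, $(\Delta_v{\boldsymbol\gamma})_u=\sum_{w\subseteq v}(-1)^{|w|}\gamma_{u\cup w}$. $\mathcal M_d$ is the set of weights with $\Delta_v{\boldsymbol\gamma}\ge\mathbf 0$ for all $v\in\mathcal U_d$ (completely monotone weights). For $C>0$, $\mathcal S_{d,C}=\{{\boldsymbol\gamma}\in\mathcal W_d:\sum_{v}C^{2|v|}\gamma_v<\infty\}$, $T^\uparrow_{d,C}\colon\mathcal S_{d,C}\to\mathcal W_d$, $(T^\uparrow_{d,C}{\boldsymbol\gamma})_u=\sum_{v\supseteq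 u}C^{2|v|}\gamma_v$, and for $d=\infty$, $T^\downarrow_{d,C}\colon\mathcal M_d\to\mathcal W_d$, $(T^\downarrow_{d,C}{\boldsymbol\gamma})_u=C^{-2|u|}\lim_{s\to\infty}(\Delta_{[s]\setminus u}{\boldsymbol\gamma})_u$ (the limit exists since the sequence is non-increasing in $[0,\gamma_u]$). *)

From HB Require Import structures.
From mathcomp Require Import all_boot all_order all_algebra.
From mathcomp Require Import finmap.
From mathcomp Require Import all_classical all_reals all_analysis.
Set Implicit Arguments. Unset Strict Implicit. Unset Printing Implicit Defensive.
Import Order.TTheory GRing.Theory Num.Theory numFieldNormedType.Exports.
Local Open Scope ring_scope.
Local Open Scope fset_scope.

(* Index set [d] = N (d = infinity), relabelled so that coordinate j >= 1 of
   the paper is the natural number j-1.  Finite subsets of [d] (U_d) are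
   elements of {fset nat}. *)
Definition Ud := {fset nat}.

(* [s] = {1,...,s} of the paper, i.e. {0,...,s-1} after relabelling. *)
Definition iseg (s : nat) : Ud := [fset i | i in iota 0 s].

Definition isWeight {R : realType} (g : Ud -> R) : Prop := forall u, 0 <= g u.

Definition Delta {R : realType} (v : Ud) (g : Ud -> R) (u : Ud) : R :=
  \sum_(w <- fpowerset v) (-1) ^+ #|` w| * g (u `|` w).

Definition isCM {R : realType} (g : Ud -> R) : Prop :=
  isWeight g /\ forall v u, 0 <= Delta v g u.

Definition inS {R : realType} (C : R) (g : Ud -> R) : Prop :=
  isWeight g /\ (\esum_(v in [set: Ud]) ((C ^+ (2 * #|` v|) * g v)%:E) < +oo)%E.

(* T^up_{d,C} : (T^up g)_u = sum_{v supseteq u} C^{2|v|} g_v  (finite on S_{d,C}) *)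
Definition Tup {R : realType} (C : R) (g : Ud -> R) (u : Ud) : R :=
  fine (\esum_(v in [set v : Ud | (u `<=` v)%fset]) ((C ^+ (2 * #|` v|) * g v)%:E)).

Definition Tdown {R : realType} (C : R) (g : Ud -> R) (u : Ud) : R :=
  C ^- (2 * #|` u|) * limn (fun s : nat => Delta (iseg s `\` u) g u).

(* Complete monotonicity makes (Delta_v g)_u nonnegative and antitone in v, so
   s |-> (Delta_([s] \ X) g)_u decreases to a limit in [0, g_u], which in turn
   increases with X.  Write a_v for the limit with X = v at u = v; it equals
   C^(2|v|) (Tdown g)_v.  Expanding Delta_([s] \ [r]) over the coordinates of
   [r] \ u shows that lim_s (Delta_([s] \ [r]) g)_u is the finite sum of a_v over
   u <= v <= [r].  As r grows these finite families exhaust the supersets of u,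
   so the iterated limit is the full sum of a_v over v >= u, which is
   (Tup (Tdown g))_u; for u = fset0 it is bounded by g_fset0, whence
   Tdown g lies in S_C. *)

From HB Require Import structures.
From mathcomp Require Import all_boot all_order all_algebra.
From mathcomp Require Import finmap.
From mathcomp Require Import all_classical all_reals all_analysis.
Import Order.TTheory GRing.Theory Num.Theory numFieldNormedType.Exports.
Local Open Scope ring_scope.
Local Open Scope fset_scope.

Lemma mem_iseg s x : (x \in iseg s) = (x < s)%N.
Proof.
apply/imfsetP/idP => [[y /=]|xs]; first by rewrite mem_iota => ? ->.
by exists x; rewrite //= mem_iota.
Qed.

Lemma iseg_subset m n : (m <= n)%N -> iseg m `<=` iseg n.
Proof. by move=> mn; apply/fsubsetP => x; rewrite !mem_iseg => /leq_trans; apply. Qed.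

Lemma fsubset_iseg (u : Ud) : exists r, u `<=` iseg r.
Proof.
exists (\max_(x <- u) x).+1; apply/fsubsetP => x xu.
by rewrite mem_iseg ltnS (leq_bigmax_seq (F := id) _ xu).
Qed.

Lemma big_fpowersetU1 (K : choiceType) (V : nmodType) (j : K) (v : {fset K})
    (F : {fset K} -> V) : j \notin v ->
  \sum_(w <- fpowerset (j |` v)) F w = \sum_(w <- fpowerset v) (F w + F (j |` w)).
Proof.
move=> jv; rewrite (big_fsetID _ (fun w : {fset K} => j \in w)) /= addrC big_split /=.
have jNw w : w \in fpowerset v -> j \notin w.
  by rewrite fpowersetE => /fsubsetP wv; apply: contra jv => /wv.
congr (_ + _)%R.
  apply: eq_fbigl => w; rewrite !inE /= !fpowersetE.
  apply/andP/idP => [[/fsubsetP wjv jw]|wv].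
    apply/fsubsetP => x xw; move: (wjv x xw); rewrite !inE => /orP[/eqP xj|//].
    by rewrite -xj xw in jw.
  by split; [exact: fsubset_trans wv (fsubsetU1 _ _)|apply: jNw; rewrite fpowersetE].
rewrite (eq_fbigl _ _ (B := [fset j |` w | w in fpowerset v])).
  rewrite big_imfset //= => w1 w2 /jNw j1 /jNw j2 e.
  by rewrite -(fsetU1K j1) -(fsetU1K j2) e.
move=> w; rewrite !inE /= fpowersetE.
apply/andP/imfsetP => [[wjv jw]|[w' /= + ->]].
  exists (w `\ j); last by rewrite fsetD1K.
  by rewrite fpowersetE fsubDset.
by rewrite fpowersetE => w'v; rewrite fsetUS // fset1U1.
Qed.

Section DeltaAlgebra.
Context {R : realType} (g : Ud -> R).

Lemma Delta0 u : Delta fset0 g u = g u.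
Proof. by rewrite /Delta fpowerset0 big_seq_fset1 cardfs0 expr0 mul1r fsetU0. Qed.

Lemma DeltaU1 j v u : j \notin v ->
  Delta (j |` v) g u = Delta v g u - Delta v g (j |` u).
Proof.
move=> jv; rewrite /Delta big_fpowersetU1 // big_split /= -sumrN.
congr (_ + _)%R; apply: eq_big_seq => w; rewrite fpowersetE => /fsubsetP wv.
have jw : j \notin w by apply: contra jv => /wv.
by rewrite cardfsU1 jw add1n exprS mulN1r mulNr fsetUCA fsetUA.
Qed.

(* For A = fset0 this is the inversion formula
   g u = \sum_(w <= B) Delta (B `\` w) g (u `|` w). *)
Lemma Delta_expand (A B : Ud) u : [disjoint A & B]%fset ->
  Delta A g u = \sum_(w <- fpowerset B) Delta (A `|` (B `\` w)) g (u `|` w).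
Proof.
elim/(@fset1U_rect nat): B => [|j B jB IH] in u * => [_|].
  by rewrite fpowerset0 big_seq_fset1 fsetD0 !fsetU0.
rewrite fdisjointXU fdisjointX1 => /andP[jA dAB].
rewrite big_fpowersetU1 // (IH u dAB); apply: eq_big_seq => w.
rewrite fpowersetE => /fsubsetP wB.
have jw : j \notin w by apply: contra jB => /wB.
have -> : A `|` ((j |` B) `\` w) = j |` (A `|` (B `\` w)).
  apply/fsetP => x; rewrite !inE.
  by case: (eqVneq x j) => [->|/negPf xj]; rewrite ?xj ?(negPf jw) ?orbT.
have -> : A `|` ((j |` B) `\` (j |` w)) = A `|` (B `\` w).
  apply/fsetP => x; rewrite !inE.
  by case: (eqVneq x j) => [->|/negPf xj]; rewrite ?xj ?(negPf jA) ?(negPf jB) ?andbF.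
by rewrite fsetUCA DeltaU1 ?subrK // !inE (negPf jA) (negPf jB) andbF.
Qed.
End DeltaAlgebra.

Section CompletelyMonotone.
Context {R : realType} (g : Ud -> R).
Hypothesis gCM : isCM g.

Lemma Delta_ge0 v u : 0 <= Delta v g u.
Proof. by case: gCM. Qed.

Lemma le_Delta v v' u : v `<=` v' -> Delta v' g u <= Delta v g u.
Proof.
move=> /fsetUidPr <-; elim/(@fset1U_rect nat): v' => [|j w jw IH]; first by rewrite fsetU0.
case: (boolP (j \in v `|` w)) => [jvw|jvw].
  by rewrite fsetUCA (fsetUidPr _ _ _) ?fsub1set.
by rewrite fsetUCA DeltaU1 // lerBlDr (le_trans IH) // lerDl Delta_ge0.
Qed.

Lemma Delta_le_weight v u : Delta v g u <= g u.
Proof. by rewrite -[leRHS]Delta0 le_Delta ?fsub0set. Qed.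

Definition Delta_inf (X : Ud) u := limn (fun s => Delta (iseg s `\` X) g u).

Lemma nonincreasing_Delta_iseg X u :
  nonincreasing_seq (fun s => Delta (iseg s `\` X) g u).
Proof. by apply/nonincreasing_seqP => s; rewrite le_Delta // fsetSD // iseg_subset. Qed.

Lemma cvgn_Delta_iseg X u : cvgn (fun s => Delta (iseg s `\` X) g u).
Proof.
apply: nonincreasing_is_cvgn; first exact: nonincreasing_Delta_iseg.
by exists 0 => _ [s _ <-]; exact: Delta_ge0.
Qed.

Lemma Delta_inf_ge0 X u : 0 <= Delta_inf X u.
Proof. by apply: limr_ge; [exact: cvgn_Delta_iseg|apply: nearW => s; exact: Delta_ge0]. Qed.

Lemma Delta_inf_le_weight X u : Delta_inf X u <= g u.
Proof.
by apply: limr_le; [exact: cvgn_Delta_iseg|apply: nearW => s; exact: Delta_le_weight].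
Qed.

Lemma le_Delta_inf X Y u : X `<=` Y -> Delta_inf X u <= Delta_inf Y u.
Proof.
move=> XY; apply: ler_lim; [exact: cvgn_Delta_iseg|exact: cvgn_Delta_iseg|].
by apply: nearW => s; rewrite le_Delta // fsetDS.
Qed.

Lemma nondecreasing_Delta_inf_iseg u :
  nondecreasing_seq (fun r => Delta_inf (iseg r) u).
Proof. by apply/nondecreasing_seqP => r; rewrite le_Delta_inf // iseg_subset. Qed.

Lemma cvgn_Delta_inf_iseg u : cvgn (fun r => Delta_inf (iseg r) u).
Proof.
apply: nondecreasing_is_cvgn; first exact: nondecreasing_Delta_inf_iseg.
by exists (g u) => _ [r _ <-]; exact: Delta_inf_le_weight.
Qed.

Lemma lim_Delta_inf_iseg_le_weight u : limn (fun r => Delta_inf (iseg r) u) <= g u.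
Proof.
apply: limr_le; first exact: cvgn_Delta_inf_iseg.
by apply: nearW => r; exact: Delta_inf_le_weight.
Qed.

Lemma Delta_inf_iseg_expand u r : u `<=` iseg r ->
  Delta_inf (iseg r) u =
    \sum_(w <- fpowerset (iseg r `\` u)) Delta_inf (u `|` w) (u `|` w).
Proof.
move=> ur; apply: cvg_lim => //.
set W := fpowerset (iseg r `\` u).
have cvg_sum :
    ((\sum_(w <- W) Delta (iseg s `\` (u `|` w))%fset g (u `|` w)%fset) @[s --> \oo]
      --> \sum_(w <- W) Delta_inf (u `|` w)%fset (u `|` w)%fset)%classic.
  by apply: cvg_big => [|w _]; [exact: add_continuous|exact: cvgn_Delta_iseg].
apply: cvg_trans cvg_sum; apply: near_eq_cvg; near=> s.
have rs : (r <= s)%N by near: s; exact: nbhs_infty_ge.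
rewrite (@Delta_expand R g _ (iseg r `\` u)); last first.
  by apply/fdisjointP => x; rewrite !in_fsetD => /andP[/negPf xr _]; rewrite xr andbF.
apply: eq_big_seq => w; rewrite fpowersetCE => /andP[/fsubsetP wr _]; congr Delta.
apply/fsetP => x; rewrite !(in_fsetD, in_fsetU) !mem_iseg; case: (ltnP x r) => xr /=.
  by rewrite (leq_trans xr rs) negb_or !andbT andbC.
have xNr : x \notin iseg r by rewrite mem_iseg -leqNgt.
have xu : x \notin u by apply: contra xNr => /(fsubsetP ur).
have xw : x \notin w by apply: contra xNr => /wr.
by rewrite (negPf xu) (negPf xw) !andbF /= orbF.
Unshelve. all: by end_near. Qed.

End CompletelyMonotone.

Section EsumExhaustion.
Context {R : realType} {T : choiceType} {S : set T} {F : nat -> {fset T}}.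
Hypothesis F_homo : {homo F : m n / (m <= n)%N >-> (m `<=` n)%fset}.
Hypothesis F_cover : forall x, S x -> exists n, x \in F n.
Local Open Scope classical_set_scope.

Lemma finite_subset_exhaustion (X : {fset T}) :
  [set` X] `<=` S -> exists n, [set` X] `<=` [set` F n].
Proof.
elim/fset1U_rect: X => [_|x X _ IH]; first by exists 0%N => y.
move=> xXS; have [m Xm] : exists m, [set` X] `<=` [set` F m].
  by apply: IH => y Xy; apply: xXS; rewrite /= !inE Xy orbT.
have [k xk] := F_cover _ (xXS x (fset1U1 _ _)).
exists (maxn m k) => y /=; rewrite !inE => /orP[/eqP->|Xy].
  exact: (fsubsetP (F_homo _ _ (leq_maxr m k)) _ xk).
by apply: (fsubsetP (F_homo _ _ (leq_maxl m k)) _ (Xm y Xy)).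
Qed.

Local Open Scope ereal_scope.

Lemma esum_cvg_exhaustion (f : T -> \bar R) :
  (forall x, S x -> 0 <= f x) -> (forall n, [set` F n] `<=` S) ->
  (\sum_(x \in [set` F n]) f x) @[n --> \oo] --> \esum_(x in S) f x.
Proof.
move=> f0 FS; set u := fun n => \sum_(x \in [set` F n]) f x.
have u_nd : nondecreasing_seq u.
  move=> m n mn; apply: lee_fsum_nneg_subset; try exact: finite_fset.
    by move=> x; rewrite !inE; apply: (fsubsetP (F_homo _ _ mn)).
  by move=> x; rewrite !inE => /andP[_ /set_mem xn]; exact: f0 _ (FS n x xn).
suff -> : \esum_(x in S) f x = ereal_sup (range u) by exact: ereal_nondecreasing_cvgn.
apply/le_anti/andP; split; apply: ge_ereal_sup.
  move=> _ [A [finA AS] <-]; have [X AX] := finite_fsetP.1 finA.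
  rewrite AX in AS *; have [n AFn] := finite_subset_exhaustion _ AS.
  apply: le_trans (ereal_sup_ubound (ex_intro2 _ _ n I erefl)).
  apply: lee_fsum_nneg_subset; try exact: finite_fset.
    by move=> x; rewrite !inE; exact: AFn.
  by move=> x; rewrite !inE => /andP[_ /set_mem xn]; exact: f0 _ (FS n x xn).
by move=> _ [n _ <-]; apply: ereal_sup_ubound; exists [set` F n].
Qed.

End EsumExhaustion.

Section Tdown.
Context {R : realType} (C : R) (g : Ud -> R).
Hypotheses (C_gt0 : 0 < C) (gCM : isCM g).

Lemma Tdown_scaled v : C ^+ (2 * #|` v|) * Tdown C g v = Delta_inf g v v.
Proof. by rewrite /Tdown mulVKf // expf_neq0 // lt0r_neq0. Qed.

Lemma Tdown_ge0 v : 0 <= Tdown C g v.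
Proof. by rewrite mulr_ge0 ?Delta_inf_ge0 // invr_ge0 exprn_ge0 // ltW. Qed.

Lemma supersets_fsetU (u : Ud) :
  [set v : Ud | (u `<=` v)%fset]%classic =
    [set (u `|` w)%fset | w in [set w : Ud | [disjoint w & u]%fset]]%classic.
Proof.
apply/seteqP; split => v /=; last by move=> [w _ <-]; exact: fsubsetUl.
move=> uv; exists (v `\` u); last by rewrite fsetUDl fsetDv fsetD0 (fsetUidPr _ _ uv).
by apply/fdisjointP => x; rewrite in_fsetD => /andP[].
Qed.

Local Open Scope ereal_scope.

Lemma esum_supersets_Tdown u :
  \esum_(v in [set v : Ud | (u `<=` v)%fset]%classic) (C ^+ (2 * #|` v|) * Tdown C g v)%:E =
    (limn (fun r => Delta_inf g (iseg r) u))%:E.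
Proof.
rewrite supersets_fsetU esum_image; last first.
  move=> w1 w2; rewrite !inE /= => dw1 dw2 /(congr1 (fun v => v `\` u)).
  by rewrite !fsetDUl fsetDv !fset0U (fsetDidPl _ _ dw1) (fsetDidPl _ _ dw2).
under eq_esum do rewrite Tdown_scaled.
set F := fun r => fpowerset (iseg r `\` u).
have F_homo : {homo F : m n / (m <= n)%N >-> (m `<=` n)%fset}.
  by move=> m n mn; rewrite fpowersetS fsetSD // iseg_subset.
have F_cover w : [disjoint w & u]%fset -> exists r, w \in F r.
  by have [r wr] := fsubset_iseg w; exists r; rewrite fpowersetCE wr.
have F_disjoint r : ([set` F r] `<=` [set w : Ud | [disjoint w & u]%fset])%classic.
  by move=> w /=; rewrite fpowersetCE => /andP[].
have summand_ge0 w : [disjoint w & u]%fset -> 0 <= (Delta_inf g (u `|` w) (u `|` w))%:E.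
  by rewrite lee_fin Delta_inf_ge0.
have [r0 ur0] := fsubset_iseg u.
have cvg_partial := esum_cvg_exhaustion F_homo F_cover _ summand_ge0 F_disjoint.
rewrite -(EFin_lim (cvgn_Delta_inf_iseg _ gCM u)); apply/esym/cvg_lim => //.
apply: cvg_trans cvg_partial; apply: near_eq_cvg; near=> r.
have ur : u `<=` iseg r.
  by rewrite (fsubset_trans ur0) // iseg_subset //; near: r; exact: nbhs_infty_ge.
by rewrite -fsbig_seq ?fset_uniq // sumEFin -Delta_inf_iseg_expand.
Unshelve. all: by end_near. Qed.

End Tdown.

Theorem mainTheorem3 (R : realType) (C : R) (g : Ud -> R) :
  0 < C -> isCM g ->
  inS C (Tdown C g) /\
  forall u : Ud,
    (forall r : nat, cvgn (fun s : nat => Delta (iseg s `\` iseg r) g u)) /\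
    cvgn (fun r : nat => limn (fun s : nat => Delta (iseg s `\` iseg r) g u)) /\
    Tup C (Tdown C g) u =
      limn (fun r : nat => limn (fun s : nat => Delta (iseg s `\` iseg r) g u)) /\
    limn (fun r : nat => limn (fun s : nat => Delta (iseg s `\` iseg r) g u)) <= g u.
Proof.
move=> C_gt0 gCM; split.
  split; first exact: Tdown_ge0.
  have -> : [set: Ud]%classic = [set v : Ud | (fset0 `<=` v)%fset]%classic.
    by apply/seteqP; split => v // _; exact: fsub0set.
  by rewrite esum_supersets_Tdown // ltry.
move=> u; split; first by move=> r; exact: cvgn_Delta_iseg.
split; first exact: (cvgn_Delta_inf_iseg _ gCM u).
split; last exact: (lim_Delta_inf_iseg_le_weight _ gCM u).
by rewrite /Tup esum_supersets_Tdown.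
Qed.
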